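(* The space $(\mathbb{Q}_Q(\mathbb{R}^n),\mathcal{G})$ is positively curved in the sense of Alexandrov: for all $A,B,C\in\mathbb{Q}_Q(\mathbb{R}^n)$, every geodesic $\gamma$ from $A$ to $B$ and every $t\in[0,1]$, $$\mathcal{G}^2(\gamma(t),C)\ge (1-t)\mathcal{G}^2(A,C)+t\,\mathcal{G}^2(B,C)-t(1-t)\mathcal{G}^2(A,B).$$
   Context: $\mathbb{Q}_Q(\mathbb{R}^n)$ denotes the set of unordered $Q$-tuples of points of $\mathbb{R}^n$, written $\sum_{i=1}^Q[[a_i]]$; two such sums are equal iff the tuples agree up to a permutation. The metric is $\mathcal{G}\big(\sum_i[[a_i]],\sum_i[[b_i]]\big)=\min_{\sigma}\big(\sum_{i=1}^Q|a_i-b_{\sigma(i)}|^2\big)^{1/2}$ over permutations $\sigma$ of $\{1,\dots,Q\}$. A geodesic from $A$ to $B$ is a curve $\gamma:[0,1]\to\mathbb{Q}_Q(\mathbb{R}^n)$ with $\gamma(0)=A$, $\gamma(1)=B$ and $\mathcal{G}(\gamma(s),\gamma(t))=|t-s|\,\mathcal{G}(A,B)$ for all $s,t\in[0,1]$. *)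

From HB Require Import structures.
From mathcomp Require Import all_boot all_order all_algebra all_fingroup.
From mathcomp Require Import reals.
Set Implicit Arguments. Unset Strict Implicit. Unset Printing Implicit Defensive.
Import Order.TTheory GRing.Theory Num.Theory.
Local Open Scope ring_scope.

(* A Q-point is represented by an ordered Q-tuple of points of R^n;
   the unordered Q-point sum_i [[a_i]] is its class modulo permutations. *)
Definition Qpt (R : realType) (Q n : nat) := 'I_Q -> 'rV[R]_n.

Definition sqdist (R : realType) (n : nat) (a b : 'rV[R]_n) : R :=
  \sum_(j < n) (a ord0 j - b ord0 j) ^+ 2.

Definition match_cost (R : realType) (Q n : nat) (A B : Qpt R Q n) (s : 'S_Q) : R :=
  \sum_(i < Q) sqdist (A i) (B (s i)).

Definition Gsq (R : realType) (Q n : nat) (A B : Qpt R Q n) : R :=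
  \big[Num.min/match_cost A B 1%g]_(s : 'S_Q) match_cost A B s.

Definition G (R : realType) (Q n : nat) (A B : Qpt R Q n) : R := Num.sqrt (Gsq A B).

Definition Qeq (R : realType) (Q n : nat) (A B : Qpt R Q n) : Prop :=
  exists s : 'S_Q, forall i, B (s i) = A i.

(* geodesic from A to B, a curve gamma : [0,1] -> Q_Q(R^n)
   (only its values on [0,1] matter) *)
Definition geodesic (R : realType) (Q n : nat) (A B : Qpt R Q n)
    (gamma : R -> Qpt R Q n) : Prop :=
  Qeq (gamma 0) A /\ Qeq (gamma 1) B /\
  forall s t : R, 0 <= s <= 1 -> 0 <= t <= 1 ->
    G (gamma s) (gamma t) = `|t - s| * G A B.

From HB Require Import structures.
From mathcomp Require Import all_boot all_order all_algebra all_fingroup.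
From mathcomp Require Import reals ring.
Set Implicit Arguments. Unset Strict Implicit. Unset Printing Implicit Defensive.
Import Order.TTheory GRing.Theory Num.Theory.
Local Open Scope ring_scope.

(* Match the tuple X := gamma t optimally with A, B and C.  The matched tuples
   are points a, x, b, c of the flat space R^(Q*n) with |a - x| = t G(A,B),
   |x - b| = (1-t) G(A,B) and G(A,B) <= |a - b|.  In a Euclidean space this
   forces x = (1-t) a + t b, and Stewart's identity then computes |x - c|^2
   exactly; since matching costs only overestimate G(A,C) and G(B,C), the
   comparison inequality follows. *)

Section EuclideanSpace.
Variables (R : realFieldType) (I : finType).
Implicit Types (a b c x : I -> R) (t D : R).

Definition dist2 a b : R := \sum_i (a i - b i) ^+ 2.

Definition lerp a b t : I -> R := fun i => (1 - t) * a i + t * b i.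

Lemma dist2_ge0 a b : 0 <= dist2 a b.
Proof. by apply: sumr_ge0 => i _; apply: sqr_ge0. Qed.

Lemma dist2_sym a b : dist2 a b = dist2 b a.
Proof. by apply: eq_bigr => i _; rewrite -sqrrN opprB. Qed.

Lemma dist2_eq0 a b : dist2 a b = 0 -> forall i, a i = b i.
Proof.
move=> /psumr_eq0P ab0 i; apply/eqP; rewrite -subr_eq0 -sqrf_eq0.
by apply/eqP/ab0 => // j _; apply: sqr_ge0.
Qed.

Lemma dist2_lerp a b c t :
  dist2 (lerp a b t) c =
    (1 - t) * dist2 a c + t * dist2 b c - t * (1 - t) * dist2 a b.
Proof.
rewrite /dist2 !mulr_sumr -big_split -sumrB /=.
by apply: eq_bigr => i _; rewrite /lerp; ring.
Qed.

Lemma dist2_comparison a b c x t D :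
  0 <= t <= 1 -> dist2 a x = t ^+ 2 * D -> dist2 x b = (1 - t) ^+ 2 * D ->
  D <= dist2 a b ->
  dist2 x c = (1 - t) * dist2 a c + t * dist2 b c - t * (1 - t) * D.
Proof.
move=> /andP [t0 t1] ax xb D_ab.
have t1t_ge0 : 0 <= t * (1 - t) by rewrite mulr_ge0 // subr_ge0.
(* Stewart's identity with c := x. *)
have lerp_x : dist2 (lerp a b t) x = t * (1 - t) * (D - dist2 a b).
  by rewrite dist2_lerp ax (dist2_sym b) xb; ring.
have lerp_x0 : dist2 (lerp a b t) x = 0.
  apply/le_anti; rewrite dist2_ge0 andbT lerp_x.
  by rewrite mulr_ge0_le0 // subr_le0.
have x_lerp : dist2 x c = dist2 (lerp a b t) c.
  by apply: eq_bigr => i _; rewrite (dist2_eq0 lerp_x0).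
have D_eq : t * (1 - t) * D = t * (1 - t) * dist2 a b.
  by apply/eqP; rewrite -subr_eq0 -mulrBr -lerp_x lerp_x0.
by rewrite x_lerp dist2_lerp D_eq.
Qed.

End EuclideanSpace.

Section QPoints.
Variables (R : realType) (Q n : nat).
Implicit Types (A B : Qpt R Q n) (p q s : 'S_Q).

Definition flat A : 'I_Q * 'I_n -> R := fun kj => A kj.1 ord0 kj.2.

Lemma dist2_flat A B : dist2 (flat A) (flat B) = \sum_k sqdist (A k) (B k).
Proof. by rewrite /sqdist pair_big. Qed.

Lemma Gsq_le_dist2 A B p q : Gsq A B <= dist2 (flat (A \o p)) (flat (B \o q)).
Proof.
have -> : dist2 (flat (A \o p)) (flat (B \o q)) = match_cost A B (p^-1 * q)%g.
  rewrite dist2_flat (reindex_inj (@perm_inj _ p^-1%g)).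
  by apply: eq_bigr => k _; rewrite /= permKV permM.
exact: bigmin_le.
Qed.

Lemma Gsq_attained A B : exists s, Gsq A B = dist2 (flat A) (flat (B \o s)).
Proof.
case: (@arg_minP _ _ _ 1%g predT (match_cost A B)) => // s _ s_min.
exists s; apply/le_anti; rewrite dist2_flat bigmin_le /=.
by apply: le_bigmin => [|s' _]; apply: s_min.
Qed.

Lemma Gsq_attained_left A B : exists s, Gsq A B = dist2 (flat (A \o s)) (flat B).
Proof.
have [s ->] := Gsq_attained A B; exists s^-1%g.
rewrite !dist2_flat (reindex_inj (@perm_inj _ s^-1%g)).
by apply: eq_bigr => k _; rewrite /= permKV.
Qed.

Lemma Gsq_ge0 A B : 0 <= Gsq A B.
Proof. by have [s ->] := Gsq_attained A B; apply: dist2_ge0. Qed.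

Lemma G_sqr A B : G A B ^+ 2 = Gsq A B.
Proof. by rewrite sqr_sqrtr // Gsq_ge0. Qed.

Lemma Qeq_refl A : Qeq A A.
Proof. by exists 1%g => i; rewrite perm1. Qed.

Lemma Qeq_sym A B : Qeq A B -> Qeq B A.
Proof. by move=> [s sAB]; exists s^-1%g => i; rewrite -sAB permKV. Qed.

Lemma Gsq_Qeq_le A A' B B' : Qeq A A' -> Qeq B B' -> Gsq A' B' <= Gsq A B.
Proof.
move=> [p AA'] [q BB']; have [s ->] := Gsq_attained A B.
have -> : dist2 (flat A) (flat (B \o s)) =
          dist2 (flat (A' \o p)) (flat (B' \o (s * q)%g)).
  by apply: eq_bigr => -[k j] _; rewrite /flat /= AA' permM BB'.
exact: Gsq_le_dist2.
Qed.

Lemma Gsq_Qeq A A' B B' : Qeq A A' -> Qeq B B' -> Gsq A B = Gsq A' B'.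
Proof.
move=> AA' BB'; apply/le_anti.
by rewrite !Gsq_Qeq_le //; apply: Qeq_sym.
Qed.

Lemma geodesic_Gsq_start A B gamma t : geodesic A B gamma -> 0 <= t <= 1 ->
  Gsq A (gamma t) = t ^+ 2 * Gsq A B.
Proof.
move=> [g0 [_ g]] t01; rewrite -(Gsq_Qeq g0 (Qeq_refl _)) -!G_sqr.
by rewrite g ?lexx ?ler01 // subr0 exprMn real_normK ?num_real.
Qed.

Lemma geodesic_Gsq_end A B gamma t : geodesic A B gamma -> 0 <= t <= 1 ->
  Gsq (gamma t) B = (1 - t) ^+ 2 * Gsq A B.
Proof.
move=> [_ [g1 g]] t01; rewrite -(Gsq_Qeq (Qeq_refl _) g1) -!G_sqr.
by rewrite g ?lexx ?ler01 // exprMn real_normK ?num_real.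
Qed.

End QPoints.

Theorem theorem3p2 (R : realType) (Q n : nat) (A B C : Qpt R Q n)
    (gamma : R -> Qpt R Q n) (t : R) :
  geodesic A B gamma -> 0 <= t <= 1 ->
  G (gamma t) C ^+ 2 >=
    (1 - t) * G A C ^+ 2 + t * G B C ^+ 2 - t * (1 - t) * G A B ^+ 2.
Proof.
move=> geo t01; have /andP [t0 t1] := t01.
have [pa AX] := Gsq_attained_left A (gamma t).
have [pb XB] := Gsq_attained (gamma t) B.
have [pc XC] := Gsq_attained (gamma t) C.
have ax : dist2 (flat (A \o pa)) (flat (gamma t)) = t ^+ 2 * Gsq A B.
  by rewrite -AX (geodesic_Gsq_start geo).
have xb : dist2 (flat (gamma t)) (flat (B \o pb)) = (1 - t) ^+ 2 * Gsq A B.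
  by rewrite -XB (geodesic_Gsq_end geo).
rewrite !G_sqr XC (dist2_comparison _ t01 ax xb (Gsq_le_dist2 A B pa pb)).
by rewrite lerD2r lerD // ler_wpM2l ?subr_ge0 ?Gsq_le_dist2.
Qed.
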